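(* Consider the closed-loop system described in the context, in which at each time $k$ the input $u_k=c^\star_{0|k}$ is obtained by solving the MPC problem $(\mathrm{MPC}_k)$ with $\bar x_{0|k}=\hat x_k$ (the Kalman filter estimate) and the tightened sets $\bar{\mathcal{X}}_{\mathrm{RF},i}$, $\bar{\mathcal{U}}_{\mathrm{RF},i}$, $\bar{\mathcal{X}}_{f,\mathrm{RF}}$. For any $k\ge 0$, if $(\mathrm{MPC}_k)$ is feasible, then, with probability (conditional on $y_{0:k}$) no smaller than $1-p_f$, $(\mathrm{MPC}_{k+1})$ is feasible. More precisely, $(\mathrm{MPC}_{k+1})$ is feasible whenever the realized disturbance $n_k$ in $\hat x_{k+1}=A\hat x_k+Bu_k+n_k$ lies in $\mathcal{E}^n_{1-p_f}$.
   Context: System: $x_{k+1}=Ax_k+Bu_k+w_k$, $y_k=Cx_k+v_k$, with $w_k\sim\mathcal{N}(0,Q)$, $v_k\sim\mathcal{N}(0,R)$ i.i.d. and mutually independent, $x_0\sim\mathcal{N}(\mu_0,\Sigma_0)$; $(A,B)$ controllable, $(A,C)$ observable. Kalman filter: $\hat x^-_{k+1}=A\hat x_k+Bu_k$, $\hat x_{k+1}=\hat x^-_{k+1}+L_{k+1}(y_{k+1}-C\hat x^-_{k+1})$, $\hat x_0^-=\mu_0$, $P_0^-=\Sigma_0$, $P^-_{k+1}=AP_kA^\top+Q$, $P_{k+1}=(I-L_{k+1}C)P^-_{k+1}$, $L_{k+1}=P^-_{k+1}C^\top(CP^-_{k+1}C^\top+R)^{-1}$. Then $\hat x_{k+1}=A\hat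 x_k+Bu_k+n_k$ with $n_k=L_{k+1}CAe_k+L_{k+1}Cw_k+L_{k+1}v_{k+1}$, $e_k=x_k-\hat x_k$, and conditionally on $y_{0:k}$, $n_k\sim\mathcal{N}(0,\Phi_k)$, $\Phi_k=L_{k+1}(C(AP_kA^\top+Q)C^\top+R)L_{k+1}^\top$; also $e_k\mid y_{0:k}\sim\mathcal{N}(0,P_k)$. Constraints: $\mathcal{X}\subseteq\mathbb{R}^{n_x}$ a convex polyhedron, $\mathcal{U}$ a polytope, probabilities $p_x,p_f\in(0,1)$. $\mathcal{E}^e_{1-p_x}$ and $\mathcal{E}^n_{1-p_f}$ are compact polytopes containing the origin in their interior with $\mathbb{P}(e_k\in\mathcal{E}^e_{1-p_x}\mid y_{0:k})\ge 1-p_x$ and $\mathbb{P}(n_k\in\mathcal{E}^n_{1-p_f}\mid y_{0:k})\ge 1-p_f$ for all $k$. $K$ is a gain with $A_{\mathrm{cl}}:=A+BK$ Schur. $\oplus$ is Minkowski sum, $\mathcal{X}\ominus\mathcal{Y}=\{x: x+y\in\mathcal{X}\ \forall y\in\mathcal{Y}\}$ is the Pontryagin difference, $\bigoplus_{q=0}^{-1}(\cdot)=\{0\}$. Tightened sets: $\hat{\mathcal{X}}=\mathcal{X}\ominus\mathcal{E}^e_{1-p_x}$; $\bar{\mathcal{X}}_{\mathrm{RF},i}=\hat{\mathcal{X}}\ominus\bigoplus_{q=0}^{i-1}A_{\mathrm{cl}}^q\mathcal{E}^n_{1-p_f}$ and $\bar{\mathcal{U}}_{\mathrm{RF},i}=\mathcal{U}\ominus\bigoplus_{q=0}^{i-1}KA_{\mathrm{cl}}^q\mathcal{E}^n_{1-p_f}$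 for $i=0,\dots,N-1$; $\hat{\mathcal{X}}_f\subseteq\hat{\mathcal{X}}$ is a robust positive invariant set for $x^+=A_{\mathrm{cl}}x+n$, $n\in\mathcal{E}^n_{1-p_f}$ (i.e. $x\in\hat{\mathcal{X}}_f\Rightarrow A_{\mathrm{cl}}x+n\in\hat{\mathcal{X}}_f$ for all $n\in\mathcal{E}^n_{1-p_f}$) with $Kx\in\mathcal{U}$ for all $x\in\hat{\mathcal{X}}_f$; $\bar{\mathcal{X}}_{f,\mathrm{RF}}=\hat{\mathcal{X}}_f\ominus\bigoplus_{q=0}^{N-1}A_{\mathrm{cl}}^q\mathcal{E}^n_{1-p_f}$. MPC problem $(\mathrm{MPC}_k)$ with horizon $N\ge1$: minimize $\sum_{i=0}^{N-1}\ell(\bar x_{i|k},c_{i|k})+O(\bar x_{N|k})$ over $c_{0|k},\dots,c_{N-1|k}$ subject to $\bar x_{i+1|k}=A\bar x_{i|k}+Bc_{i|k}$, $\bar x_{0|k}=\hat x_k$, $\bar x_{i|k}\in\bar{\mathcal{X}}_{\mathrm{RF},i}$, $c_{i|k}\in\bar{\mathcal{U}}_{\mathrm{RF},i}$ for $i=0,\dots,N-1$, and $\bar x_{N|k}\in\bar{\mathcal{X}}_{f,\mathrm{RF}}$; $\ell$ and $O$ are given cost functions. ''Feasible'' means the constraint set is nonempty; the applied input is $u_k=c^\star_{0|k}$ from an optimal solution. *)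

From HB Require Import structures.
From mathcomp Require Import all_boot all_order all_algebra.
From mathcomp Require Import all_classical all_reals all_analysis.
From mathcomp Require Import complex.

Set Implicit Arguments.
Unset Strict Implicit.
Unset Printing Implicit Defensive.

Import Order.TTheory GRing.Theory Num.Theory.
Local Open Scope classical_set_scope.
Local Open Scope ring_scope.

Section Defs.
Variable R : realType.

Definition msum n (S T : set 'cV[R]_n) : set 'cV[R]_n :=
  [set z | exists x y, S x /\ T y /\ z = x + y].

Definition pdiff n (X Y : set 'cV[R]_n) : set 'cV[R]_n :=
  [set x | forall y, Y y -> X (x + y)].

Definition limg m n (M : 'M[R]_(m, n)) (E : set 'cV[R]_n) : set 'cV[R]_m :=
  [set M *m y | y in E].

Fixpoint msum_upto n (f : nat -> set 'cV[R]_n) (i : nat) : set 'cV[R]_n :=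
  match i with
  | 0 => [set 0]
  | i'.+1 => msum (msum_upto f i') (f i')
  end.

Definition polyhedron n (S : set 'cV[R]_n) : Prop :=
  exists (m : nat) (H : 'M[R]_(m, n)) (h : 'cV[R]_m),
    S = [set x | forall i : 'I_m, (H *m x) i 0 <= h i 0].

Definition bounded_set n (S : set 'cV[R]_n) : Prop :=
  exists M : R, forall x, S x -> forall i : 'I_n, `|x i 0| <= M.

Definition polytope n (S : set 'cV[R]_n) : Prop := polyhedron S /\ bounded_set S.

Definition zero_interior n (S : set 'cV[R]_n) : Prop :=
  exists eps : R, 0 < eps /\
    forall x : 'cV[R]_n, (forall i : 'I_n, `|x i 0| < eps) -> S x.

(* Kalman rank criterion: [B, AB, ..., A^{n-1}B] has rank n,
   i.e. the row spaces of (A^i B)^T together span everything. *)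
Definition controllable n m (A : 'M[R]_n) (B : 'M[R]_(n, m)) : Prop :=
  \rank (\sum_(i < n) <<(A ^+ i *m B)^T>>)%MS = n.

Definition observable n p (A : 'M[R]_n) (C : 'M[R]_(p, n)) : Prop :=
  \rank (\sum_(i < n) <<C *m A ^+ i>>)%MS = n.

Definition schur n (A : 'M[R]_n) : Prop :=
  forall l : R[i], eigenvalue (map_mx (fun x : R => (x%:C)%C) A) l -> `|l| < 1.

Fixpoint traj nx nu (A : 'M[R]_nx) (B : 'M[R]_(nx, nu)) (x0 : 'cV[R]_nx)
    (c : nat -> 'cV[R]_nu) (i : nat) : 'cV[R]_nx :=
  match i with
  | 0 => x0
  | i'.+1 => A *m traj A B x0 c i' + B *m c i'
  end.

Section MPC.
Variables (nx nu : nat) (A : 'M[R]_nx) (B : 'M[R]_(nx, nu)) (K : 'M[R]_(nu, nx)).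
Variables (X Ee En Xf : set 'cV[R]_nx) (U : set 'cV[R]_nu) (N : nat).

Definition Acl : 'M[R]_nx := A + B *m K.

Definition Xhat : set 'cV[R]_nx := pdiff X Ee.

Definition XRF (i : nat) : set 'cV[R]_nx :=
  pdiff Xhat (msum_upto (fun q => limg (Acl ^+ q) En) i).

Definition URF (i : nat) : set 'cV[R]_nu :=
  pdiff U (msum_upto (fun q => limg (K *m Acl ^+ q) En) i).

Definition XfRF : set 'cV[R]_nx :=
  pdiff Xf (msum_upto (fun q => limg (Acl ^+ q) En) N).

(* c = (c_{0|k}, ..., c_{N-1|k}) (entries beyond N-1 are irrelevant)
   satisfies the constraints of (MPC) with initial state x0 *)
Definition mpc_admissible (x0 : 'cV[R]_nx) (c : nat -> 'cV[R]_nu) : Prop :=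
  (forall i, (i < N)%N -> XRF i (traj A B x0 c i) /\ URF i (c i)) /\
  XfRF (traj A B x0 c N).

Definition mpc_feasible (x0 : 'cV[R]_nx) : Prop :=
  exists c, mpc_admissible x0 c.

Definition mpc_cost (l : 'cV[R]_nx -> 'cV[R]_nu -> R) (O : 'cV[R]_nx -> R)
    (x0 : 'cV[R]_nx) (c : nat -> 'cV[R]_nu) : R :=
  \sum_(i < N) l (traj A B x0 c i) (c i) + O (traj A B x0 c N).

Definition mpc_optimal l O (x0 : 'cV[R]_nx) (c : nat -> 'cV[R]_nu) : Prop :=
  mpc_admissible x0 c /\
  forall c', mpc_admissible x0 c' -> mpc_cost l O x0 c <= mpc_cost l O x0 c'.

End MPC.
End Defs.

From Pilot Require Import Defs.
From HB Require Import structures.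
From mathcomp Require Import all_boot all_order all_algebra.
From mathcomp Require Import all_classical all_reals all_analysis.
From mathcomp Require Import complex.

Set Implicit Arguments.
Unset Strict Implicit.
Unset Printing Implicit Defensive.

Import Order.TTheory GRing.Theory Num.Theory.
Local Open Scope classical_set_scope.
Local Open Scope ring_scope.

(* Let c be admissible for (MPC_k) from the estimate x0 and let v be a
   disturbance in En.  The standard shifted candidate for (MPC_{k+1}) from
   x0' = A x0 + B c_0 + v is
       c'_i     = c_{i+1} + K Acl^i v            (i < N-1),
       c'_{N-1} = K (xbar_N + Acl^{N-1} v),
   whose nominal trajectory is xbar'_i = xbar_{i+1} + Acl^i v.  Since
   Acl^i v lies in the (i+1)-th summand of the tightening, a point of
   S ⊖ (F_0 ⊕ ... ⊕ F_i) moved by an element of F_i lies in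
   S ⊖ (F_0 ⊕ ... ⊕ F_{i-1}); this gives the state and input constraints.
   The last step uses that the terminal set is robustly invariant under
   x -> Acl x + En and that K maps it into U. *)

Section SetAlgebra.
Variable R : realType.

Lemma msum_upto_snoc n (f : nat -> set 'cV[R]_n) i y u :
  msum_upto f i y -> f i u -> msum_upto f i.+1 (y + u).
Proof. by move=> Sy fu; exists y, u. Qed.

Lemma msum_upto_pow_shift n (M : 'M[R]_n) (E : set 'cV[R]_n) i y :
  msum_upto (fun q => Defs.limg (M ^+ q) E) i.+1 y ->
  exists e z, E e /\ msum_upto (fun q => Defs.limg (M ^+ q) E) i z /\
              y = e + M *m z.
Proof.
elim: i y => [|i IH] y.
  move=> [a [b [/= -> [[u Eu <-] ->]]]].
  exists u, 0; split=> //; split=> //.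
  by rewrite mulmx0 addr0 add0r expr0 mul1mx.
move=> [a [b [Sa [[u Eu <-] ->]]]].
have [e [z [Ee [Sz ->]]]] := IH a Sa.
exists e, (z + M ^+ i *m u); split=> //; split.
  by apply: msum_upto_snoc => //; exists u.
by rewrite exprS -mulmxE mulmxDr mulmxA addrA.
Qed.

Lemma msum_upto_lin_image n m (M : 'M[R]_n) (K : 'M[R]_(m, n))
    (E : set 'cV[R]_n) i y :
  msum_upto (fun q => Defs.limg (K *m M ^+ q) E) i y ->
  exists z, msum_upto (fun q => Defs.limg (M ^+ q) E) i z /\ y = K *m z.
Proof.
elim: i y => [|i IH] y.
  by move=> /= ->; exists 0; rewrite mulmx0.
move=> [a [b [Sa [[u Eu <-] ->]]]].
have [z [Sz ->]] := IH a Sa.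
exists (z + M ^+ i *m u); split; first by apply: msum_upto_snoc => //; exists u.
by rewrite mulmxDr mulmxA.
Qed.

Lemma pdiff_subl n (S T E : set 'cV[R]_n) : S `<=` T -> pdiff S E `<=` pdiff T E.
Proof. by move=> ST x Sx y Ey; apply/ST/Sx. Qed.

Lemma pdiff_msum_upto_step n (S : set 'cV[R]_n) (f : nat -> set 'cV[R]_n) i x a :
  pdiff S (msum_upto f i.+1) x -> f i a -> pdiff S (msum_upto f i) (x + a).
Proof.
move=> Sx fa y Sy; rewrite -addrA (addrC a y).
exact/Sx/msum_upto_snoc.
Qed.

Lemma pdiff_lin_image n m (M : 'M[R]_n) (K : 'M[R]_(m, n))
    (T E : set 'cV[R]_n) (U : set 'cV[R]_m) i z :
  (forall x, T x -> U (K *m x)) ->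
  pdiff T (msum_upto (fun q => Defs.limg (M ^+ q) E) i) z ->
  pdiff U (msum_upto (fun q => Defs.limg (K *m M ^+ q) E) i) (K *m z).
Proof.
move=> KTU Tz y /msum_upto_lin_image [z' [Sz' ->]].
by rewrite -mulmxDr; apply/KTU/Tz.
Qed.

Lemma pdiff_invariant_step n (M : 'M[R]_n) (T E : set 'cV[R]_n) i z :
  (forall x, T x -> forall v, E v -> T (M *m x + v)) ->
  pdiff T (msum_upto (fun q => Defs.limg (M ^+ q) E) i) z ->
  pdiff T (msum_upto (fun q => Defs.limg (M ^+ q) E) i.+1) (M *m z).
Proof.
move=> inv Tz y /msum_upto_pow_shift [e [z' [Ee [Sz' ->]]]].
by rewrite addrCA -mulmxDr addrC; apply/inv/Ee/Tz.
Qed.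

End SetAlgebra.

Section RecursiveFeasibility.
Variables (R : realType) (nx nu : nat).
Variables (A : 'M[R]_nx) (B : 'M[R]_(nx, nu)) (K : 'M[R]_(nu, nx)).
Variables (X Ee En Xf : set 'cV[R]_nx) (U : set 'cV[R]_nu).

Let Ac := Acl A B K.

Lemma traj_shifted x0 (c c' : nat -> 'cV[R]_nu) v M :
  (forall i, (i < M)%N -> c' i = c i.+1 + K *m (Ac ^+ i *m v)) ->
  forall i, (i <= M)%N ->
    traj A B (A *m x0 + B *m c 0%N + v) c' i = traj A B x0 c i.+1 + Ac ^+ i *m v.
Proof.
move=> c'E; elim=> [|i IH] Hi; first by rewrite /= expr0 mul1mx.
rewrite [LHS]/= IH ?(ltnW Hi) // c'E //.
have -> : traj A B x0 c i.+2 = A *m traj A B x0 c i.+1 + B *m c i.+1 by [].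
rewrite exprS -mulmxE -mulmxA.
move: (traj A B x0 c i.+1) (Ac ^+ i *m v) (c i.+1) => x y z.
by rewrite /Ac /Acl !mulmxDr mulmxDl mulmxA addrACA.
Qed.

Definition shifted_candidate x0 (c : nat -> 'cV[R]_nu) v M (i : nat) : 'cV[R]_nu :=
  if (i < M)%N then c i.+1 + K *m (Ac ^+ i *m v)
  else K *m (traj A B x0 c M.+1 + Ac ^+ M *m v).

Hypothesis Xf_sub : Xf `<=` Xhat X Ee.
Hypothesis Xf_invariant : forall x, Xf x -> forall v, En v -> Xf (Ac *m x + v).
Hypothesis Xf_input : forall x, Xf x -> U (K *m x).

Lemma shifted_candidate_admissible x0 c v M :
  mpc_admissible A B K X Ee En Xf U M.+1 x0 c -> En v ->
  mpc_admissible A B K X Ee En Xf U M.+1 (A *m x0 + B *m c 0%N + v)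
    (shifted_candidate x0 c v M).
Proof.
move=> [adm term] Ev.
have trajE := @traj_shifted x0 c (shifted_candidate x0 c v M) v M
  (fun i iM => ifT _ _ iM).
have inEn i : Defs.limg (Ac ^+ i) En (Ac ^+ i *m v) by exists v.
set z := traj A B x0 c M.+1 + Ac ^+ M *m v.
have Xfz : pdiff Xf (msum_upto (fun q => Defs.limg (Ac ^+ q) En) M) z.
  exact: pdiff_msum_upto_step term (inEn M).
split; last first.
  rewrite /XfRF /= trajE // /shifted_candidate ltnn -/z.
  have -> : A *m z + B *m (K *m z) = Ac *m z by rewrite /Ac /Acl mulmxDl mulmxA.
  exact: pdiff_invariant_step Xf_invariant Xfz.
move=> i; rewrite ltnS => iM; rewrite trajE //.
have [ltiM | /negbTE geiM] := boolP (i < M)%N.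
  have [Xi Ui] := adm i.+1 ltiM.
  rewrite /shifted_candidate ltiM; split; first exact: pdiff_msum_upto_step Xi (inEn i).
  by apply: pdiff_msum_upto_step Ui _; rewrite mulmxA; exists v.
have -> : i = M by apply/eqP; rewrite eqn_leq iM leqNgt geiM.
rewrite /shifted_candidate ltnn -/z; split; first exact: pdiff_subl Xf_sub _ Xfz.
exact: pdiff_lin_image Xf_input Xfz.
Qed.

Lemma recursive_feasibility x0 c v N :
  (0 < N)%N -> mpc_admissible A B K X Ee En Xf U N x0 c -> En v ->
  mpc_feasible A B K X Ee En Xf U N (A *m x0 + B *m c 0%N + v).
Proof.
case: N => // M _ adm Ev.
by exists (shifted_candidate x0 c v M); exact: shifted_candidate_admissible.
Qed.

End RecursiveFeasibility.

(* P models the conditional law given y_{0:k}: under it, the estimate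
   xh = \hat x_k and the applied input u_k are fixed, while the error
   e_k and the innovation term n_k are random variables on Omega. *)
Theorem theorem1 (R : realType) (nx nu ny : nat)
  (A : 'M[R]_nx) (B : 'M[R]_(nx, nu)) (C : 'M[R]_(ny, nx)) (K : 'M[R]_(nu, nx))
  (X Ee En Xf : set 'cV[R]_nx) (U : set 'cV[R]_nu) (px pf : R) (N : nat)
  (l : 'cV[R]_nx -> 'cV[R]_nu -> R) (O : 'cV[R]_nx -> R)
  (d : measure_display) (Omega : measurableType d) (P : probability Omega R)
  (e n : Omega -> 'cV[R]_nx)
  (xh : 'cV[R]_nx) (c : nat -> 'cV[R]_nu) :
  controllable A B -> observable A C ->
  polyhedron X -> polytope U ->
  0 < px < 1 -> 0 < pf < 1 ->
  polytope Ee -> zero_interior Ee ->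
  polytope En -> zero_interior En ->
  measurable [set w | Ee (e w)] -> ((1 - px)%:E <= P [set w | Ee (e w)])%E ->
  measurable [set w | En (n w)] -> ((1 - pf)%:E <= P [set w | En (n w)])%E ->
  schur (Acl A B K) ->
  Xf `<=` Xhat X Ee ->
  (forall x, Xf x -> forall v, En v -> Xf (Acl A B K *m x + v)) ->
  (forall x, Xf x -> U (K *m x)) ->
  (0 < N)%N ->
  (* (MPC_k) is feasible and c is an optimal solution; u_k = c 0 *)
  mpc_feasible A B K X Ee En Xf U N xh ->
  mpc_optimal A B K X Ee En Xf U N l O xh c ->
  (* next estimate  \hat x_{k+1} = A \hat x_k + B u_k + n_k *)
  (forall w, En (n w) ->
     mpc_feasible A B K X Ee En Xf U N (A *m xh + B *m c 0%N + n w)) /\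
  (exists S : set Omega, measurable S /\ ((1 - pf)%:E <= P S)%E /\
     forall w, S w ->
       mpc_feasible A B K X Ee En Xf U N (A *m xh + B *m c 0%N + n w)).
Proof.
move=> _ _ _ _ _ _ _ _ _ _ _ _ mesEn probEn _ XfXh XfInv XfU N0 _ [adm _].
have feasible w : En (n w) ->
    mpc_feasible A B K X Ee En Xf U N (A *m xh + B *m c 0%N + n w).
  exact: (recursive_feasibility XfXh XfInv XfU N0 adm).
split=> //.
by exists [set w | En (n w)].
Qed.
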